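(* (a) There is an SSSCG with one follower, in which the leader's cost functions are weakly monotonic but the follower's are not, whose unique OSE and unique PSE prescribe the leader a mixed strategy: $R=\{r_1,r_2\}$, $c_{r_k,\ell}(1)=1$, $c_{r_k,\ell}(2)=2$, $c_{r_k,f}(1)=2$, $c_{r_k,f}(2)=1$ for $k=1,2$; the leader's equilibrium strategy is $\sigma_\ell(r_1)=\sigma_\ell(r_2)=\tfrac12$. (b) There is an SSSCG with one follower, in which the follower's cost functions are weakly monotonic but the leader's are not, whose unique OSE and unique PSE prescribe the leader a mixed strategy: $R=\{r_1,r_2\}$, $c_{r_k,\ell}(1)=2$, $c_{r_k,\ell}(2)=0$, $c_{r_k,f}(1)=1$, $c_{r_k,f}(2)=2$ for $k=1,2$; the leader's equilibrium strategy is $\sigma_\ell(r_1)=\sigma_\ell(r_2)=\tfrac12$.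
   Context: A symmetric Stackelberg singleton congestion game (SSSCG) consists of a leader $\ell$, a finite set $F$ of followers, a finite set $R$ of resources which every player may select (each player selects exactly one), and cost functions $c_{i,\ell},c_{i,f}:\mathbb N\to\mathbb Q$ ($i\in R$) for the leader and the followers with $c_{i,\ell}(0)=c_{i,f}(0)=0$. The leader commits to a probability distribution $\sigma_\ell$ on $R$ (pure if it puts probability $1$ on one resource). A followers' configuration is $\nu\in\mathbb N^R$ with $\sum_i\nu_i=|F|$. The followers' expected cost of resource $i$ with $x$ followers is $c^{\sigma_\ell}_{i,f}(x)=\sigma_\ell(i)c_{i,f}(x+1)+(1-\sigma_\ell(i))c_{i,f}(x)$; the leader's cost is $c_\ell^{(\sigma_\ell,\nu)}=\sum_{i\in R}\sigma_\ell(i)c_{i,\ell}(\nu_i+1)$. $\nu$ is a Nash equilibrium for $\sigma_\ell$ ($\nu\in E^{\sigma_\ell}$) if for all $i$ with $\nu_i>0$ and all $j\ne i$, $c^{\sigma_\ell}_{i,f}(\nu_i)\le c^{\sigma_\ell}_{j,f}(\nu_j+1)$. An OSE is a pair $(\sigma_\ell,\nu)$ with $\nu\in E^{\sigma_\ell}$ minimizing $c_\ell^{(\sigma_\ell,\nu)}$ over all such pairs. A PSE is a pair $(\sigma_\ell,\nu)$ such that $\sigma_\ell$ attains the minimum over all leader strategies of $\max_{\nu'\in E^{\sigma_\ell}}c_\ell^{(\sigma_\ell,\nu')}$ and $\nu\in E^{\sigma_\ell}$ attains that maximum. Weakly monotonic: $c(x)\le c(x+1)$ for all $x$. *)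

From HB Require Import structures.
From mathcomp Require Import all_boot all_order all_algebra.
Set Implicit Arguments. Unset Strict Implicit. Unset Printing Implicit Defensive.
Import Order.TTheory GRing.Theory Num.Theory.
Local Open Scope ring_scope.

(* A game is given by a finite resource type R, the number n = |F| of
   followers, and cost functions cl (leader) and cf (followers) : R -> nat -> rat
   with cl i 0 = cf i 0 = 0. *)

Definition cost_fun_zero (c : nat -> rat) : Prop := c 0%N = 0.

Definition weakly_monotonic (c : nat -> rat) : Prop :=
  forall x : nat, c x <= c x.+1.

Definition is_leader_strategy (R : finType) (s : {ffun R -> rat}) : Prop :=
  (forall i, 0 <= s i) /\ \sum_(i : R) s i = 1.

Definition is_config (R : finType) (n : nat) (nu : {ffun R -> nat}) : Prop :=
  (\sum_(i : R) nu i)%N = n.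

Definition fcost (R : finType) (cf : R -> nat -> rat) (s : {ffun R -> rat})
  (i : R) (x : nat) : rat :=
  s i * cf i x.+1 + (1 - s i) * cf i x.

Definition lcost (R : finType) (cl : R -> nat -> rat) (s : {ffun R -> rat})
  (nu : {ffun R -> nat}) : rat :=
  \sum_(i : R) s i * cl i (nu i).+1.

Definition is_NE (R : finType) (n : nat) (cf : R -> nat -> rat)
  (s : {ffun R -> rat}) (nu : {ffun R -> nat}) : Prop :=
  is_config n nu /\
  forall i j : R, (0 < nu i)%N -> j != i ->
    fcost cf s i (nu i) <= fcost cf s j (nu j).+1.

Definition is_OSE (R : finType) (n : nat) (cl cf : R -> nat -> rat)
  (s : {ffun R -> rat}) (nu : {ffun R -> nat}) : Prop :=
  is_leader_strategy s /\ is_NE n cf s nu /\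
  forall s' nu', is_leader_strategy s' -> is_NE n cf s' nu' ->
    lcost cl s nu <= lcost cl s' nu'.

(* Pessimistic Stackelberg equilibrium: nu attains max_{nu' in E^s} of the
   leader cost (so this value is M(s)), and for every leader strategy s' the
   value M(s') = max_{nu' in E^{s'}} lcost s' nu' is at least M(s), i.e. some
   nu' in E^{s'} has lcost s' nu' >= lcost s nu. *)
Definition is_PSE (R : finType) (n : nat) (cl cf : R -> nat -> rat)
  (s : {ffun R -> rat}) (nu : {ffun R -> nat}) : Prop :=
  is_leader_strategy s /\ is_NE n cf s nu /\
  (forall nu', is_NE n cf s nu' -> lcost cl s nu' <= lcost cl s nu) /\
  forall s', is_leader_strategy s' ->
    exists2 nu', is_NE n cf s' nu' & lcost cl s nu <= lcost cl s' nu'.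

From HB Require Import structures.
From mathcomp Require Import all_boot all_order all_algebra.
From mathcomp Require Import ring lra zify.
Set Implicit Arguments. Unset Strict Implicit. Unset Printing Implicit Defensive.
Import Order.TTheory GRing.Theory Num.Theory.
Local Open Scope ring_scope.

(* Both games have two identical resources and a single follower.
   Once the leader plays s, the follower sits on one resource i, and this is a
   Nash equilibrium iff s i * d <= s j * d for the other resource j, where
   d = c_f(2) - c_f(1).  The leader then pays c_l(1) + s i * a with
   a = c_l(2) - c_l(1).  Since s i + s j = 1, the excess of this cost over
   (c_l(1) + c_l(2)) / 2 is (s i - 1/2) * a, and the equilibrium condition says
   (s i - 1/2) * d <= 0.  When a and d have opposite signs (true in both games),
   the excess is therefore nonnegative, and zero exactly when s is uniform. *)

(* A sufficient condition, for arbitrary games, for a strategy s0 to be the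
   unique leader strategy in both optimistic and pessimistic equilibria. *)
Section StackelbergCriterion.
Variables (R : finType) (n : nat) (cl cf : R -> nat -> rat).
Variables (s0 : {ffun R -> rat}) (V : rat).
Hypothesis s0_strategy : is_leader_strategy s0.
Hypothesis NE_exists : forall s, exists nu, is_NE n cf s nu.
Hypothesis cost_ge : forall s nu,
  is_leader_strategy s -> is_NE n cf s nu -> V <= lcost cl s nu.
Hypothesis cost_le_eq : forall s nu,
  is_leader_strategy s -> is_NE n cf s nu -> lcost cl s nu <= V -> s = s0.
Hypothesis s0_cost : forall nu, is_NE n cf s0 nu -> lcost cl s0 nu = V.

Lemma OSE_exists : exists s nu, is_OSE n cl cf s nu.
Proof.
have [nu0 NE0] := NE_exists s0.
exists s0, nu0; do 2!split=> //.
by move=> s nu s_strat NE; rewrite s0_cost //; apply: cost_ge.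
Qed.

Lemma OSE_unique s nu : is_OSE n cl cf s nu -> s = s0.
Proof.
case=> s_strat [NE opt]; have [nu0 NE0] := NE_exists s0.
apply: (cost_le_eq s_strat NE); rewrite -(s0_cost NE0).
exact: opt s0_strategy NE0.
Qed.

Lemma PSE_exists : exists s nu, is_PSE n cl cf s nu.
Proof.
have [nu0 NE0] := NE_exists s0.
exists s0, nu0; do 2!split=> //; split.
  by move=> nu NE; rewrite !s0_cost.
move=> s s_strat; have [nu NE] := NE_exists s.
by exists nu; rewrite // s0_cost //; apply: cost_ge.
Qed.

Lemma PSE_unique s nu : is_PSE n cl cf s nu -> s = s0.
Proof.
case=> s_strat [NE [_ pess]]; have [nu0 NE0 le_cost] := pess s0 s0_strategy.
by apply: (cost_le_eq s_strat NE); rewrite -(s0_cost NE0).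
Qed.

End StackelbergCriterion.

Section OneFollower.
Variable R : finType.

Definition single (i : R) : {ffun R -> nat} := [ffun j => nat_of_bool (j == i)].

Lemma single_config i : is_config 1 (single i).
Proof.
rewrite /is_config (bigD1 i) //= big1 ?ffunE ?eqxx // => j ji.
by rewrite ffunE (negbTE ji).
Qed.

Lemma config_one nu : is_config 1 nu -> exists i, nu = single i.
Proof.
rewrite /is_config => sum1.
have [i nu_i] : exists i, (0 < nu i)%N.
  have : (\sum_j nu j != 0)%N by rewrite sum1.
  by rewrite sum_nat_eq0 negb_forall => /existsP [i]; rewrite -lt0n; exists i.
move: sum1; rewrite (bigD1 i) //= => sum1.
have [nu_i1 rest0] : nu i = 1%N /\ (\sum_(j | j != i) nu j = 0)%N by lia.
exists i; apply/ffunP => j; rewrite ffunE; case: eqP => [->|/eqP ji] //=.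
by move/eqP: rest0; rewrite sum_nat_eq0 => /forall_inP/(_ j ji)/eqP.
Qed.

Lemma NE_one (cf : R -> nat -> rat) s nu :
  is_NE 1 cf s nu <->
  exists2 i, nu = single i & forall j, j != i -> fcost cf s i 1 <= fcost cf s j 1.
Proof.
split=> [[/config_one [i ->] stable]|[i -> stable]].
  exists i => // j ji; move: (stable i j); rewrite !ffunE eqxx (negbTE ji); exact.
split; first exact: single_config.
move=> k j; rewrite !ffunE; case: eqP => // -> _ ji; rewrite (negbTE ji); exact: stable.
Qed.

End OneFollower.

Section UniformCosts.
Variable R : finType.

Definition uniform_cost (c : nat -> rat) : R -> nat -> rat := fun _ => c.

Lemma fcost_uniform (c : nat -> rat) s i :
  fcost (uniform_cost c) s i 1 = c 1%N + s i * (c 2%N - c 1%N).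
Proof. rewrite /fcost /uniform_cost; ring. Qed.

Lemma NE_uniform (cf : nat -> rat) s nu :
  is_NE 1 (uniform_cost cf) s nu <->
  exists2 i, nu = single i &
    forall j, j != i -> s i * (cf 2%N - cf 1%N) <= s j * (cf 2%N - cf 1%N).
Proof.
rewrite NE_one; split=> -[i nu_i stable]; exists i => // j ji; move: (stable j ji);
  by rewrite !fcost_uniform lerD2l.
Qed.

Lemma NE_uniform_exists (cf : nat -> rat) (r : R) s :
  exists nu, is_NE 1 (uniform_cost cf) s nu.
Proof.
pose d := cf 2%N - cf 1%N.
case: (@arg_minP _ _ _ r predT (fun k => s k * d)) => // i _ i_min.
by exists (single i); apply/NE_uniform; exists i => // j _; apply: i_min.
Qed.

(* The leader pays cl 2 on the follower's resource and cl 1 elsewhere. *)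
Lemma lcost_uniform (cl : nat -> rat) s i : is_leader_strategy s ->
  lcost (uniform_cost cl) s (single i) = cl 1%N + s i * (cl 2%N - cl 1%N).
Proof.
case=> _ sum_s; rewrite /lcost (bigD1 i) //= ffunE eqxx.
have -> : \sum_(j | j != i) s j * uniform_cost cl j (single i j).+1 = (1 - s i) * cl 1%N.
  rewrite -sum_s [in RHS](bigD1 i) //= addrAC subrr add0r mulr_suml.
  by apply: eq_bigr => j ji; rewrite ffunE (negbTE ji).
rewrite /uniform_cost; ring.
Qed.

End UniformCosts.

Lemma opposite_sign (x a d : rat) :
  a * d < 0 -> x * d <= 0 -> 0 <= x * a /\ (x * a <= 0 -> x = 0).
Proof.
move=> ad_neg xd_nonpos.
have xa_nonneg : 0 <= x * a by nra.
split=> // xa_nonpos; have /eqP : x * a = 0 by lra.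
rewrite mulf_eq0 => /orP[/eqP //|/eqP a0].
by move: ad_neg; rewrite a0 mul0r ltxx.
Qed.

Lemma I2_other (i : 'I_2) : exists2 j, j != i & forall k, k = i \/ k = j.
Proof.
have cases (k : 'I_2) : k = ord0 \/ k = ord_max.
  by case: k => -[|[|//]] lt_k; [left|right]; apply: val_inj.
by case: (cases i) => ->; [exists ord_max | exists ord0] => // k; case: (cases k); auto.
Qed.

Definition uniform2 : {ffun 'I_2 -> rat} := [ffun _ => 1 / 2].

Lemma uniform2E k : uniform2 k = 1 / 2.
Proof. by rewrite ffunE. Qed.

Lemma uniform2_strategy : is_leader_strategy uniform2.
Proof.
split=> [i|]; first by rewrite uniform2E.
by rewrite big_ord_recl big_ord1 !uniform2E; lra.
Qed.

Lemma strategy2_other (s : {ffun 'I_2 -> rat}) i j :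
  is_leader_strategy s -> j != i -> (forall k, k = i \/ k = j) -> s j = 1 - s i.
Proof.
case=> _ <- ji cover; rewrite (bigD1 i) //= (big_pred1 j); first lra.
by move=> k /=; case: (cover k) => ->; rewrite ?eqxx ?(negbTE ji) // eq_sym (negbTE ji).
Qed.

Section TwoResources.
Variables cl cf : nat -> rat.
Hypothesis opposite : (cl 2%N - cl 1%N) * (cf 2%N - cf 1%N) < 0.
Local Notation leader_cost := (@uniform_cost 'I_2 cl).
Local Notation follower_cost := (@uniform_cost 'I_2 cf).

Lemma NE_two_resources s nu :
  is_leader_strategy s -> is_NE 1 follower_cost s nu ->
  exists i, [/\ lcost leader_cost s nu = cl 1%N + s i * (cl 2%N - cl 1%N),
              (s i - 1 / 2) * (cf 2%N - cf 1%N) <= 0 &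
              (s i = 1 / 2 -> s = uniform2)].
Proof.
move=> s_strat /NE_uniform [i -> stable]; have [j ji cover] := I2_other i.
have sj := strategy2_other s_strat ji cover.
exists i; split; first exact: lcost_uniform.
  by move: (stable j ji); rewrite sj; lra.
move=> si; apply/ffunP => k; rewrite uniform2E.
by case: (cover k) => ->; rewrite ?sj si; lra.
Qed.

Lemma cost_ge_two s nu :
  is_leader_strategy s -> is_NE 1 follower_cost s nu ->
  (cl 1%N + cl 2%N) / 2 <= lcost leader_cost s nu.
Proof.
move=> s_strat /(NE_two_resources s_strat) [i [-> stable _]].
have [sign _] := opposite_sign opposite stable; lra.
Qed.

Lemma cost_le_eq_two s nu :
  is_leader_strategy s -> is_NE 1 follower_cost s nu ->
  lcost leader_cost s nu <= (cl 1%N + cl 2%N) / 2 -> s = uniform2.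
Proof.
move=> s_strat /(NE_two_resources s_strat) [i [-> stable uniform]] le_cost.
have [_ zero] := opposite_sign opposite stable; apply: uniform.
have si_half : s i - 1 / 2 = 0 by apply: zero; lra.
lra.
Qed.

Lemma uniform2_cost nu :
  is_NE 1 follower_cost uniform2 nu ->
  lcost leader_cost uniform2 nu = (cl 1%N + cl 2%N) / 2.
Proof.
case/NE_uniform => i -> _.
by rewrite lcost_uniform ?uniform2E; [lra | exact: uniform2_strategy].
Qed.

Theorem two_resource_equilibria :
  (exists s nu, is_OSE 1 leader_cost follower_cost s nu) /\
  (forall s nu, is_OSE 1 leader_cost follower_cost s nu -> forall k, s k = 1 / 2) /\
  (exists s nu, is_PSE 1 leader_cost follower_cost s nu) /\
  (forall s nu, is_PSE 1 leader_cost follower_cost s nu -> forall k, s k = 1 / 2).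
Proof.
have NE_exists s := NE_uniform_exists cf (ord0 : 'I_2) s.
split; first exact: OSE_exists uniform2_strategy NE_exists cost_ge_two uniform2_cost.
split.
  move=> s nu /(OSE_unique uniform2_strategy NE_exists cost_le_eq_two uniform2_cost) -> k.
  exact: uniform2E.
split; first exact: PSE_exists uniform2_strategy NE_exists cost_ge_two uniform2_cost.
move=> s nu /(PSE_unique uniform2_strategy cost_le_eq_two uniform2_cost) -> k.
exact: uniform2E.
Qed.

End TwoResources.

Definition linear_cost (x : nat) : rat := x%:R.

Definition follower_cost_a (x : nat) : rat :=
  match x with 0 => 0 | 1 => 2 | _ => 1 end.

Definition leader_cost_b (x : nat) : rat :=
  match x with 1 => 2 | _ => 0 end.

Lemma linear_cost_monotonic : weakly_monotonic linear_cost.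
Proof. by move=> x; rewrite /linear_cost ler_nat. Qed.

Lemma follower_cost_a_not_monotonic : ~ weakly_monotonic follower_cost_a.
Proof. by move=> /(_ 1%N) /=; lra. Qed.

Lemma leader_cost_b_not_monotonic : ~ weakly_monotonic leader_cost_b.
Proof. by move=> /(_ 1%N) /=; lra. Qed.

(* (a) monotone leader costs, non-monotone follower costs; (b) the reverse.
   In both, a = cl 2 - cl 1 and d = cf 2 - cf 1 have opposite signs. *)
Theorem mainTheorem18 :
  (exists cl cf : 'I_2 -> nat -> rat,
     (forall k, cost_fun_zero (cl k) /\ cost_fun_zero (cf k)) /\
     (forall k, cl k 1%N = 1 /\ cl k 2%N = 2 /\ cf k 1%N = 2 /\ cf k 2%N = 1) /\
     (forall k, weakly_monotonic (cl k)) /\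
     (forall k, ~ weakly_monotonic (cf k)) /\
     (exists s nu, is_OSE 1 cl cf s nu) /\
     (forall s nu, is_OSE 1 cl cf s nu -> forall k, s k = 1 / 2) /\
     (exists s nu, is_PSE 1 cl cf s nu) /\
     (forall s nu, is_PSE 1 cl cf s nu -> forall k, s k = 1 / 2))
  /\
  (exists cl cf : 'I_2 -> nat -> rat,
     (forall k, cost_fun_zero (cl k) /\ cost_fun_zero (cf k)) /\
     (forall k, cl k 1%N = 2 /\ cl k 2%N = 0 /\ cf k 1%N = 1 /\ cf k 2%N = 2) /\
     (forall k, weakly_monotonic (cf k)) /\
     (forall k, ~ weakly_monotonic (cl k)) /\
     (exists s nu, is_OSE 1 cl cf s nu) /\
     (forall s nu, is_OSE 1 cl cf s nu -> forall k, s k = 1 / 2) /\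
     (exists s nu, is_PSE 1 cl cf s nu) /\
     (forall s nu, is_PSE 1 cl cf s nu -> forall k, s k = 1 / 2)).
Proof.
split.
- exists (uniform_cost linear_cost), (uniform_cost follower_cost_a).
  do 2!split=> //.
  split=> [k|]; first exact: linear_cost_monotonic.
  split=> [k|]; first exact: follower_cost_a_not_monotonic.
  by apply: two_resource_equilibria; rewrite /=; lra.
- exists (uniform_cost leader_cost_b), (uniform_cost linear_cost).
  do 2!split=> //.
  split=> [k|]; first exact: linear_cost_monotonic.
  split=> [k|]; first exact: leader_cost_b_not_monotonic.
  by apply: two_resource_equilibria; rewrite /=; lra.
Qed.
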